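(* Let $r\geq 1$ be odd and $m\geq 3$. For every integer $j$ with $1\leq j\leq \frac{2^{rm}-1}{2^{m}-1}-1$, we have $\mathrm{wt}_{rm}((2^m-1)j)\leq rm-m$.
   Context: For an integer $0\le i\le 2^k-1$, $\mathrm{wt}_k(i)$ denotes the number of $1$'s in the binary expansion of $i$. (Here $(2^m-1)j<2^{rm}-1$.) *)

From mathcomp Require Import all_boot.
Set Implicit Arguments. Unset Strict Implicit. Unset Printing Implicit Defensive.

Definition wt (k i : nat) : nat := \sum_(b < k) odd (i %/ 2 ^ b).

(* Write K = r m and N = 2^K - 1, the all-ones word of length K.  Since 2^m - 1
   divides N, the complement N - (2^m - 1) j of (2^m - 1) j is again a positive
   multiple of 2^m - 1, and complementing K-bit words turns weights w into K - w.
   It therefore suffices that every positive multiple n < 2^K of 2^m - 1 has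
   weight at least m.  Folding n = q 2^m + s into q + s preserves the residue
   modulo 2^m - 1, does not increase the weight and decreases n as long as
   n >= 2^m; the descent ends at 2^m - 1 itself, whose weight is m. *)

From mathcomp Require Import all_boot.
From mathcomp Require Import zify.

Lemma wt0 n : wt 0 n = 0.
Proof. by rewrite /wt big_ord0. Qed.

Lemma wtS K n : wt K.+1 n = odd n + wt K (n %/ 2).
Proof.
rewrite /wt big_ord_recl expn0 divn1; congr (_ + _).
by apply: eq_bigr => i _; rewrite /= expnS divnMA.
Qed.

Lemma wtn0 K : wt K 0 = 0.
Proof. by elim: K => [|K IHK]; rewrite ?wt0 // wtS div0n IHK. Qed.

Lemma wtD_carry K a b (c : bool) : wt K (a + b + c) <= wt K a + wt K b + c.
Proof.
elim: K a b c => [|K IHK] a b c; first by rewrite !wt0.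
rewrite !wtS -!modn2.
set c' : bool := 1 < a %% 2 + b %% 2 + c.
have -> : (a + b + c) %/ 2 = a %/ 2 + b %/ 2 + c' by rewrite /c'; case: ltnP; lia.
by have := IHK (a %/ 2) (b %/ 2) c'; rewrite /c'; case: ltnP; lia.
Qed.

Lemma wtD_le K a b : wt K (a + b) <= wt K a + wt K b.
Proof. by have := wtD_carry K a b false; rewrite !addn0. Qed.

Lemma wt_cat m L s q : s < 2 ^ m -> wt (m + L) (s + 2 ^ m * q) = wt m s + wt L q.
Proof.
elim: m s => [|m IHm] s s_lt.
  by move: s_lt; rewrite expn0 ltnS leqn0 => /eqP->; rewrite wt0 mul1n.
rewrite addSn !wtS -addnA -IHm; last by rewrite expnS in s_lt; lia.
congr (_ + wt _ _); first by rewrite oddD oddM oddX addbF.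
rewrite expnS; lia.
Qed.

Lemma wt_widen K L n : n < 2 ^ K -> wt (K + L) n = wt K n.
Proof. by move=> n_lt; have := @wt_cat K L n 0 n_lt; rewrite muln0 addn0 wtn0 addn0. Qed.

Lemma wt_compl K y : y < 2 ^ K -> wt K (2 ^ K - 1 - y) + wt K y = K.
Proof.
elim: K y => [|K IHK] y y_lt; first by rewrite !wt0.
rewrite !wtS; have := IHK (y %/ 2); rewrite expnS in y_lt.
have -> : (2 ^ K.+1 - 1 - y) %/ 2 = 2 ^ K - 1 - y %/ 2 by rewrite expnS; lia.
have : odd (2 ^ K.+1 - 1 - y) + odd y = 1.
  have -> : 2 ^ K.+1 - 1 - y = (2 ^ K - 1 - y %/ 2).*2 + ~~ odd y.
    by rewrite expnS -muln2 -[y in LHS](odd_double_half y); case: (odd y); lia.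
  by rewrite oddD odd_double; case: (odd y).
lia.
Qed.

Lemma wt_ones K : wt K (2 ^ K - 1) = K.
Proof. by have := @wt_compl K 0; rewrite expn_gt0 subn0 wtn0 addn0; apply. Qed.

Lemma dvdn_subn1_expn x r : x - 1 %| x ^ r - 1.
Proof.
case: x => [|x]; first by case: r => [|r] //; rewrite exp0n.
rewrite subn1 -eqn_mod_dvd ?expn_gt0 //=.
by rewrite -modnXm -addn1 modnDl modnXm exp1n.
Qed.

Section Folding.

Variable m : nat.

Definition fold n := n %/ 2 ^ m + n %% 2 ^ m.

Lemma fold_mod n : fold n = n %[mod 2 ^ m - 1].
Proof.
have le_q := leq_pmulr (n %/ 2 ^ m) (expn_gt0 2 m).
rewrite [in RHS](divn_eq n (2 ^ m)).
have -> : n %/ 2 ^ m * 2 ^ m + n %% 2 ^ m = n %/ 2 ^ m * (2 ^ m - 1) + fold n.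
  by rewrite /fold mulnBr muln1; lia.
by rewrite modnMDl.
Qed.

Lemma fold_lt n : 0 < m -> 2 ^ m <= n -> fold n < n.
Proof.
move=> m_gt0 n_ge; rewrite /fold [in X in _ < X](divn_eq n (2 ^ m)) ltn_add2r.
have q_gt0 : 0 < n %/ 2 ^ m by rewrite divn_gt0 ?expn_gt0.
by rewrite ltn_Pmulr // -[1]/(2 ^ 0) ltn_exp2l.
Qed.

Lemma wt_fold K n : m <= K -> n < 2 ^ K -> wt K (fold n) <= wt K n.
Proof.
move=> le_mK n_lt; set q := n %/ 2 ^ m; set s := n %% 2 ^ m.
have s_lt : s < 2 ^ m by rewrite ltn_mod expn_gt0.
have q_lt : q < 2 ^ (K - m) by rewrite ltn_divLR ?expn_gt0 // -expnD subnK.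
have wt_n : wt K n = wt m s + wt (K - m) q.
  by rewrite {1}(divn_eq n (2 ^ m)) addnC mulnC -{1}(subnKC le_mK) (wt_cat _ _ _ _ s_lt).
have wt_s : wt K s = wt m s by rewrite -(subnKC le_mK) wt_widen.
have wt_q : wt K q = wt (K - m) q by rewrite -{1}(subnK le_mK) wt_widen.
by rewrite wt_n -wt_s -wt_q addnC wtD_le.
Qed.

Lemma wt_dvdn_ge K n : 0 < n -> 2 ^ m - 1 %| n -> n < 2 ^ K -> m <= wt K n.
Proof.
have [-> // | m_gt0] := posnP m.
elim: n {-2}n (leqnn n) => [|N IHN] n le_nN n_gt0 dvd_n n_lt.
  by move: n_gt0; rewrite ltnNge le_nN.
have le_mn := dvdn_leq n_gt0 dvd_n.
have le_mK : m <= K by rewrite -(@leq_exp2l 2) //; lia.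
have [lt_n_2m | ge_n_2m] := ltnP n (2 ^ m).
  have -> : n = 2 ^ m - 1 by lia.
  by rewrite -(subnKC le_mK) wt_widen ?wt_ones // ltn_subrL expn_gt0.
have lt_fold := fold_lt _ m_gt0 ge_n_2m.
apply: leq_trans (wt_fold _ _ le_mK n_lt).
apply: IHN; [lia | | | lia].
- by rewrite /fold addn_gt0 divn_gt0 ?expn_gt0 ?ge_n_2m.
- by rewrite /dvdn fold_mod -/(dvdn _ n).
Qed.

End Folding.

Theorem lemma4 (r m j : nat) :
  odd r -> 1 <= r -> 3 <= m ->
  1 <= j -> j <= (2 ^ (r * m) - 1) %/ (2 ^ m - 1) - 1 ->
  wt (r * m) ((2 ^ m - 1) * j) <= r * m - m.
Proof.
move=> _ _ m_ge3 j_gt0; set K := r * m; set M := _ %/ _ => j_lt.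
have dvd_M : 2 ^ m - 1 %| 2 ^ K - 1 by rewrite /K mulnC expnM dvdn_subn1_expn.
have def_M : (2 ^ m - 1) * M = 2 ^ K - 1 by rewrite mulnC divnK.
have two_m_gt1 : 1 < 2 ^ m by rewrite -[1]/(2 ^ 0) ltn_exp2l //; lia.
set y := (2 ^ m - 1) * (M - j).
have le_jM : (2 ^ m - 1) * j <= (2 ^ m - 1) * M by rewrite leq_mul2l; lia.
have def_y : y = (2 ^ m - 1) * M - (2 ^ m - 1) * j by rewrite /y mulnBr.
have y_lt : y < 2 ^ K by have := expn_gt0 2 K; lia.
have y_gt0 : 0 < y by rewrite muln_gt0; lia.
have -> : (2 ^ m - 1) * j = 2 ^ K - 1 - y by lia.
have := wt_compl _ _ y_lt; have := wt_dvdn_ge m _ _ y_gt0 (dvdn_mulr _ (dvdnn _)) y_lt.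
lia.
Qed.
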